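(* (i) For all configurations $\gamma,\gamma'$ with $\gamma\to_d\gamma'$: $\gamma^{\bot}\le_d\gamma'^{\bot}$ and $\gamma'^{\top}\le_d\gamma^{\top}$. (ii) For all configurations $\gamma_0,\gamma$ such that $\gamma$ is reachable from $\gamma_0$ by a finite number (possibly zero) of d-steps: $\gamma_0^{\bot}\le_d\gamma\le_d\gamma_0^{\top}$.
   Context: Let $G$ be a finite, connected, undirected graph with node set $V$ and a distinguished node $r$ (the root); $\mathrm{dist}(p,r)$ denotes graph distance. Each node $p$ has a fixed ordered list $N(p)$ of its neighbours. A configuration $\gamma$ assigns to each node $p$ a value $\gamma.p.d\in\mathbb N$ and a neighbour $\gamma.p.par\in N(p)$. For a non-root node $p$ let $Dist_p(\gamma)=\min\{\gamma.q.d+1 : q\in N(p)\}$. Algorithm BFS: Root enabled iff $\gamma.r.d\neq 0$, executing sets $r.d:=0$. Non-root $p$, action CD: enabled iff $\gamma.p.d\ne Dist_p(\gamma)$, executing sets $p.d:=Dist_p(\gamma)$. Non-root $p$, action CP: enabled iff $\gamma.p.d=Dist_p(\gamma)$ and $\gamma.q_0.d+1\neq\gamma.p.d$ with $q_0=\gamma.p.par$; executing sets $p.par$ to the first $q\in N(p)$ with $\gamma.q.d+1=\gamma.p.d$. A step $\gamma\to\gamma'$ holds iff a nonempty set $S$ of enabled nodes simultaneously execute their enabled action (evaluated in $\gamma$), others unchanged. A d-step $\gamma\to_d\gamma'$ is a step with $\gamma.r.d=\gamma'.r.d$ and $\gamma.p.d\neq\gamma'.p.d$ for some $p$. $\min_d\gamma=\min\{\gamma.q.d:q\in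 V\}$. Bottom/top configurations: equal to $\gamma$ except $\gamma^{\bot}.p.d=\min_d\gamma$ for all $p$; $\gamma^{\top}.r.d=\gamma.r.d$ and for $p\neq r$, $\gamma^{\top}.p.d=\max\big(\gamma.p.d,\;1+\min\{\gamma^{\top}.q.d : q \text{ adjacent to } p,\ \mathrm{dist}(p,r)=1+\mathrm{dist}(q,r)\}\big)$. $\gamma_1\le_d\gamma_2$ iff $\gamma_1.q.d\le\gamma_2.q.d$ for all $q\in V$. *)

From mathcomp Require Import all_boot.
Set Implicit Arguments. Unset Strict Implicit. Unset Printing Implicit Defensive.

Section BFS.
(* Graph: finite node type V, symmetric irreflexive adjacency e, root r,
   ordered neighbour lists N p (duplicate-free, listing exactly the neighbours). *)
Variables (V : finType) (e : rel V) (N : V -> seq V) (r : V).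

(* minimum of a nonempty list of naturals (0 on the empty list) *)
Definition minl (s : seq nat) : nat := foldr minn (head 0 s) s.

Fixpoint ball (q : V) (k : nat) : {set V} :=
  match k with
  | 0 => [set q]
  | k'.+1 => ball q k' :|: [set p | [exists x in ball q k', e x p]]
  end.

(* graph distance (for a connected graph every distance is < #|V|) *)
Definition dist (p q : V) : nat := find (fun k => p \in ball q k) (iota 0 #|V|).

Record config := Config { cd : V -> nat; cpar : V -> V }.

Definition valid (g : config) : Prop := forall p, cpar g p \in N p.

Definition Dist (g : config) (p : V) : nat := minl [seq cd g q + 1 | q <- N p].

Definition enabled (g : config) (p : V) : bool :=
  if p == r then cd g r != 0
  else (cd g p != Dist g p) ||
       ((cd g p == Dist g p) && (cd g (cpar g p) + 1 != cd g p)).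

Definition exec (g : config) (p : V) : nat * V :=
  if p == r then (0, cpar g p)
  else if cd g p != Dist g p then (Dist g p, cpar g p)
  else (cd g p, nth p (N p) (find (fun q => cd g q + 1 == cd g p) (N p))).

Definition step (g g' : config) : Prop :=
  exists S : {set V}, S != set0 /\ (forall p, p \in S -> enabled g p) /\
    forall p, (cd g' p, cpar g' p) =
              (if p \in S then exec g p else (cd g p, cpar g p)).

Definition dstep (g g' : config) : Prop :=
  step g g' /\ cd g r = cd g' r /\ exists p, cd g p != cd g' p.

Inductive dreach : config -> config -> Prop :=
  | dreach_refl g : dreach g g
  | dreach_step g g' g'' : dstep g g' -> dreach g' g'' -> dreach g g''.

Definition min_d (g : config) : nat := minl [seq cd g q | q <- enum V].

Definition bot (g : config) : config := Config (fun _ => min_d g) (cpar g).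

Fixpoint topd (g : config) (k : nat) (p : V) : nat :=
  match k with
  | 0 => cd g p
  | k'.+1 => maxn (cd g p)
      (1 + minl [seq topd g k' q | q <- enum V & e p q && (dist q r == k')])
  end.

Definition top (g : config) : config :=
  Config (fun p => if p == r then cd g r else topd g (dist p r) p) (cpar g).

Definition le_d (g1 g2 : config) : Prop := forall q, cd g1 q <= cd g2 q.

End BFS.

From mathcomp Require Import all_boot.
Set Implicit Arguments. Unset Strict Implicit.

(* A d-step keeps the root value and sets some other values p.d to
   Dist_p = 1 + min of the neighbours' values, which is above the global
   minimum; hence min_d never decreases. For the top bound, induct on the
   distance k to the root: a node p at distance k+1 has a neighbour q at
   distance k, so the new value Dist_p <= q.d + 1 <= top(q) + 1, and the
   top values at distance k only decrease by induction. Part (ii) follows by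
   induction on the number of d-steps, since bot g <= g <= top g. *)

Lemma minl_le (s : seq nat) x : x \in s -> minl s <= x.
Proof.
case: s => [//|a s]; rewrite /minl /=.
suff le_fold b : x \in s -> foldr minn b s <= x.
  rewrite inE => /orP[/eqP->|/le_fold le_x]; first exact: geq_minl.
  exact: leq_trans (geq_minr _ _) (le_x a).
elim: s => [//|c s IH] /=; rewrite inE => /orP[/eqP->|/IH le_x].
  exact: geq_minl.
exact: leq_trans (geq_minr _ _) le_x.
Qed.

Lemma foldr_minn_mem (b : nat) s : foldr minn b s \in b :: s.
Proof.
elim: s => [|c s IH] /=; first exact: mem_head.
rewrite /minn; case: ifP => _; first by rewrite !inE eqxx orbT.
by move: IH; rewrite !inE => /orP[->|->]; rewrite ?orbT.
Qed.

Lemma minl_mem (s : seq nat) : s != [::] -> minl s \in s.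
Proof.
case: s => [//|a s] _; rewrite /minl /= /minn.
case: ifP => _; [exact: mem_head | exact: foldr_minn_mem].
Qed.

Lemma minl_le_minl (s t : seq nat) :
  t != [::] -> (forall y, y \in t -> exists2 x, x \in s & x <= y) ->
  minl s <= minl t.
Proof.
move=> /minl_mem t_min le_st; have [x xs le_x] := le_st _ t_min.
exact: leq_trans (minl_le xs) le_x.
Qed.

Lemma minl_map_mono (T : eqType) (s : seq T) (f g : T -> nat) :
  (forall x, x \in s -> f x <= g x) -> minl (map f s) <= minl (map g s).
Proof.
case: s => [//|a s] le_fg; apply: minl_le_minl => // _ /mapP[x xs ->].
by exists (f x); [exact: map_f | exact: le_fg].
Qed.

Section Distance.

Variables (V : finType) (e : rel V).
Hypothesis e_sym : symmetric e.
Hypothesis e_conn : forall p q, connect e p q.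

Lemma ball_mono q j k : j <= k -> ball e q j \subset ball e q k.
Proof.
move=> /subnK <-; elim: (k - j) => [|m IH]; first by rewrite add0n.
by rewrite addSn (subset_trans IH) //= subsetUl.
Qed.

Lemma mem_ballS q k p x : x \in ball e q k -> e x p -> p \in ball e q k.+1.
Proof.
by move=> xk xp; rewrite /= !inE; apply/orP; right; apply/existsP; exists x; rewrite xk.
Qed.

Lemma path_ball x s : path e x s -> last x s \in ball e x (size s).
Proof.
elim/last_ind: s => [|s y IH]; first by rewrite /= inE.
by rewrite rcons_path last_rcons size_rcons => /andP[/IH s_ball]; apply: mem_ballS.
Qed.

Lemma dist_min p q j : j < #|V| -> p \in ball e q j -> dist e p q <= j.
Proof.
move=> j_lt p_ball; rewrite leqNgt; apply/negP => lt_j.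
by have := before_find 0 lt_j; rewrite nth_iota // p_ball.
Qed.

(* Any node reaches q by a duplicate-free path, hence within #|V| - 1 edges. *)
Lemma dist_lt_card p q : dist e p q < #|V|.
Proof.
have /connectP[s qs ->] := e_conn q p.
case: (shortenP qs) => s' qs' uniq_s' _.
have size_lt : size s' < #|V|.
  by rewrite -ltnS -[(size s').+1]/(size (q :: s')) -(card_uniqP uniq_s') ltnS max_card.
exact: leq_ltn_trans (dist_min size_lt (path_ball qs')) size_lt.
Qed.

Lemma dist_ball p q : p \in ball e q (dist e p q).
Proof.
have has_k : has (fun k => p \in ball e q k) (iota 0 #|V|).
  by rewrite has_find size_iota; exact: dist_lt_card.
by have := nth_find 0 has_k; rewrite nth_iota ?dist_lt_card.
Qed.

Lemma dist_eq0 p q : (dist e p q == 0) = (p == q).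
Proof.
apply/eqP/eqP => [dist0 | ->]; first by have := dist_ball p q; rewrite dist0 inE => /eqP.
apply/eqP; rewrite -leqn0; apply: dist_min; last by rewrite inE.
exact: leq_ltn_trans (dist_lt_card q q).
Qed.

Lemma exists_dist_pred p q k :
  dist e p q = k.+1 -> exists2 x, e p x & dist e x q = k.
Proof.
move=> dist_p; have k_lt : k < #|V| by apply: ltnW; rewrite -dist_p dist_lt_card.
have not_k : p \notin ball e q k.
  by apply/negP => /(dist_min k_lt); rewrite dist_p ltnn.
have := dist_ball p q; rewrite dist_p /= inE (negPf not_k) inE.
case/existsP => x /andP[x_ball xp]; exists x; first by rewrite e_sym.
apply/eqP; rewrite eqn_leq dist_min //= leqNgt; apply/negP => lt_k.
have := mem_ballS (dist_ball x q) xp.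
by move/(subsetP (ball_mono q lt_k)); rewrite (negPf not_k).
Qed.

End Distance.

Section DSteps.

Variables (V : finType) (e : rel V) (N : V -> seq V) (r : V).
Hypothesis e_sym : symmetric e.
Hypothesis e_conn : forall p q, connect e p q.
Hypothesis N_nb : forall p q, (q \in N p) = e p q.

Lemma dstep_cd g g' p : dstep N r g g' ->
  cd g' p = cd g p \/ (p != r /\ cd g' p = Dist N g p).
Proof.
case=> -[S [_ [_ exec_S]]] [root_d _].
have [-> | p_r] := eqVneq p r; first by left.
have := congr1 fst (exec_S p) => /= ->.
case: (p \in S); [rewrite /exec (negPf p_r) | by left].
by case: ifP => _; [right | left].
Qed.

Lemma min_d_attained (g : config V) : exists p, min_d g = cd g p.
Proof.
have enum_r : r \in enum V by rewrite mem_enum.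
have /mapP[p _ ->] : min_d g \in [seq cd g q | q <- enum V].
  by apply: minl_mem; case: (enum V) enum_r.
by exists p.
Qed.

Lemma min_d_le (g : config V) p : min_d g <= cd g p.
Proof. by apply: minl_le; apply: map_f; rewrite mem_enum. Qed.

Lemma min_d_le_Dist g p : p != r -> min_d g <= Dist N g p.
Proof.
move=> p_r; have [k dist_p] : exists k, dist e p r = k.+1.
  by case: (dist e p r) (dist_eq0 e_conn p r) => [|k]; [rewrite (negPf p_r) | exists k].
have [x px _] := exists_dist_pred e_sym e_conn dist_p.
have xN : x \in N p by rewrite N_nb.
apply: minl_le_minl => [|_ /mapP[q _ ->]]; first by case: (N p) xN.
by exists (cd g q); [apply: map_f; rewrite mem_enum | exact: leq_addr].
Qed.

Lemma topd_ge g k p : cd g p <= topd e r g k p.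
Proof. by case: k => //= k; exact: leq_maxl. Qed.

Lemma Dist_le_topd g k p : dist e p r = k.+1 -> Dist N g p <= topd e r g k.+1 p.
Proof.
move=> dist_p; have [x px dist_x] := exists_dist_pred e_sym e_conn dist_p.
set L := [seq topd e r g k q | q <- enum V & e p q && (dist e q r == k)].
have xL : topd e r g k x \in L.
  by apply: map_f; rewrite mem_filter px dist_x eqxx mem_enum.
have L_nil : L != [::] by case: L xL.
have /mapP[q] := minl_mem L_nil; rewrite mem_filter => /andP[/andP[pq _] _] min_q.
rewrite /= -/L min_q; apply: leq_trans (leq_maxr _ _); rewrite add1n -addn1.
apply: (@leq_trans (cd g q + 1)); last by rewrite leq_add2r topd_ge.
by apply: minl_le; apply: (map_f (fun q => cd g q + 1)); rewrite N_nb.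
Qed.

Lemma topd_dstep g g' k p :
  dstep N r g g' -> dist e p r = k -> topd e r g' k p <= topd e r g k p.
Proof.
move=> step; have [_ [root_d _]] := step.
elim: k p => [|k IH] p dist_p /=.
  by move/eqP: dist_p; rewrite dist_eq0 // => /eqP->; rewrite root_d.
rewrite geq_max; apply/andP; split.
  case: (dstep_cd p step) => [-> | [_ ->]]; first exact: leq_maxl.
  exact: Dist_le_topd.
apply: leq_trans (leq_maxr _ _); rewrite leq_add2l; apply: minl_map_mono => q.
by rewrite mem_filter => /andP[/andP[_ /eqP dist_q] _]; exact: IH.
Qed.

Lemma top_dstep g g' : dstep N r g g' -> le_d (top e r g') (top e r g).
Proof.
move=> step q /=; case: eqP => _; last exact: topd_dstep.
by case: step => [_ [-> _]].
Qed.

Lemma bot_dstep g g' : dstep N r g g' -> le_d (bot g) (bot g').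
Proof.
move=> step _ /=; have [p ->] := min_d_attained g'.
case: (dstep_cd p step) => [-> | [p_r ->]]; [exact: min_d_le | exact: min_d_le_Dist p_r].
Qed.

Lemma dreach_bounds g0 g :
  dreach N r g0 g -> le_d (bot g0) g /\ le_d g (top e r g0).
Proof.
elim=> {g0 g} [g | g g' g'' step _ [bot_le le_top]]; split => q.
- exact: min_d_le.
- by rewrite /=; case: eqP => [-> // | _]; exact: topd_ge.
- exact: leq_trans (bot_dstep step q) (bot_le q).
- exact: leq_trans (le_top q) (top_dstep step q).
Qed.

End DSteps.

Theorem lemma4 (V : finType) (e : rel V) (N : V -> seq V) (r : V)
  (e_sym : symmetric e) (e_irr : irreflexive e)
  (e_conn : forall p q, connect e p q)
  (N_uniq : forall p, uniq (N p)) (N_nb : forall p q, (q \in N p) = e p q) :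
  (forall g g' : config V,
      valid N g -> valid N g' -> dstep N r g g' ->
      le_d (bot g) (bot g') /\ le_d (top e r g') (top e r g)) /\
  (forall g0 g : config V,
      valid N g0 -> dreach N r g0 g ->
      le_d (bot g0) g /\ le_d g (top e r g0)).
Proof.
split=> [g g' _ _ step | g0 g _ reach].
  by split; [exact: bot_dstep step | exact: top_dstep step].
exact: dreach_bounds reach.
Qed.
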